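(* (i) For every context $\Gamma$: if $\Gamma\ \mathrm{ok}$ then $\Gamma\ \mathrm{ok}_s$. (ii) For every context $\Gamma$ and terms $M,A$: if $\Gamma\vdash M:A$ then $\Gamma\vdash_s M:A$.
   Context: Let $\mathcal V$ (the variables) be a type with decidable equality, equipped with functions $\mathrm{encode}:\mathcal V\to\mathbb N$ and $\mathrm{decode}:\mathbb N\to\mathcal V$ such that $\mathrm{encode}(\mathrm{decode}\,n)=n$ for all $n$. Let $\mathcal C$ (the constants) be any type. Terms $\Lambda$ are generated by: $c\,k$ ($k\in\mathcal C$), $v\,x$ ($x\in\mathcal V$), $\lambda[x:A]M$, $\Pi[x:A]B$ and $M\cdot N$; in $\lambda[x:A]M$ and $\Pi[x:A]B$ the name $x$ binds in $M$ (resp. $B$) but not in $A$. Terms are raw first-order syntax (not identified up to renaming of bound variables) and $\equiv$ denotes syntactic identity. The list of free variables is $\mathrm{fv}(c\,k)=[\,]$, $\mathrm{fv}(v\,x)=[x]$, $\mathrm{fv}(\lambda[x:A]M)=\mathrm{fv}\,A\mathbin{+\!\!+}(\mathrm{fv}\,M-x)$, $\mathrm{fv}(\Pi[x:A]B)=\mathrm{fv}\,A\mathbin{+\!\!+}(\mathrm{fv}\,B-x)$, $\mathrm{fv}(M\cdot N)=\mathrm{fv}\,M\mathbin{+\!\!+}\mathrm{fv}\,N$, where $\mathbin{+\!\!+}$ is list concatenation and $xs-x$ deletes every occurrence of $x$ from $xs$. Fix a function $\chi':\mathrm{List}\,\mathbb N\to\mathbb N$ with $\chi'(ns)\notin ns$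 for every list $ns$, and put $X'(xs)=\mathrm{decode}(\chi'(\mathrm{map}\ \mathrm{encode}\ xs))$. A substitution is any function $\sigma:\mathcal V\to\Lambda$; $\iota=v$ is the identity substitution; $(\sigma,x:=N)(y)=N$ if $y=x$ and $\sigma\,y$ otherwise. For a substitution $\sigma$ and a list $xs$ of variables, $X(\sigma,xs)=X'(\text{concatenation of the lists }\mathrm{fv}(\sigma\,y)\text{ for }y\in xs)$. The action $M\bullet\sigma$ is defined by structural recursion: $c\,k\bullet\sigma=c\,k$; $v\,x\bullet\sigma=\sigma\,x$; $(M\cdot N)\bullet\sigma=(M\bullet\sigma)\cdot(N\bullet\sigma)$; $(\lambda[x:A]M)\bullet\sigma=\lambda[y:A\bullet\sigma](M\bullet(\sigma,x:=v\,y))$ with $y=X(\sigma,\mathrm{fv}\,M-x)$; $(\Pi[x:A]B)\bullet\sigma=\Pi[y:A\bullet\sigma](B\bullet(\sigma,x:=v\,y))$ with $y=X(\sigma,\mathrm{fv}\,B-x)$. Unary substitution is $M[x:=N]=M\bullet(\iota,x:=N)$. $\alpha$-conversion $\sim_\alpha$ is the inductively defined relation with rules: $c\,k\sim_\alpha c\,k$; $v\,x\sim_\alpha v\,x$; $M\cdot N\sim_\alpha M'\cdot N'$ if $M\sim_\alpha M'$ and $N\sim_\alpha N'$; $\lambda[x:A]M\sim_\alpha\lambda[x':A']M'$ if $A\sim_\alpha A'$ and there is a variable $y$ with $y\notin\mathrm{fv}\,M-x$, $y\notin\mathrm{fv}\,M'-x'$ and $M[x:=v\,y]\equiv M'[x':=v\,y]$;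 and the same rule with $\Pi$ in place of $\lambda$. $\beta$-contraction is $(\lambda[x:A]M)\cdot N\ \triangleright_\beta\ M[x:=N]$. One-step $\beta$-reduction $\to_\beta$ is its contextual closure, inductively: $M\to_\beta N$ if $M\triangleright_\beta N$; $\lambda[x:A]M\to_\beta\lambda[x:A]M'$ and $\Pi[x:A]M\to_\beta\Pi[x:A]M'$ if $M\to_\beta M'$; $\lambda[x:A]M\to_\beta\lambda[x:A']M$ and $\Pi[x:A]M\to_\beta\Pi[x:A']M$ if $A\to_\beta A'$; $M\cdot P\to_\beta N\cdot P$ and $P\cdot M\to_\beta P\cdot N$ if $M\to_\beta N$. $\beta$-conversion $\simeq_\beta$ is the equivalence (reflexive–symmetric–transitive) closure of $\sim_\alpha\cup\to_\beta$. Pure Type System: fix a binary relation $\mathcal A\subseteq\mathcal C\times\mathcal C$ (axioms) and a ternary relation $\mathcal R\subseteq\mathcal C\times\mathcal C\times\mathcal C$ (rules). A context is a finite list of pairs $(x,A)$ with $x\in\mathcal V$, $A\in\Lambda$; $\Gamma,x:A$ denotes the list $(x,A)::\Gamma$; $\mathrm{dom}\,\Gamma$ is the list of first components; $(x,A)\in\Gamma$ is list membership. The judgments $\Gamma\ \mathrm{ok}$ and $\Gamma\vdash M:A$ are defined mutually inductively by: (nil) $[\,]\ \mathrm{ok}$; (cons) if $\Gamma\ \mathrm{ok}$, $\Gamma\vdash A:c\,s$ and $x\notin\mathrm{dom}\,\Gamma$ then $\Gamma,x:A\ \mathrm{ok}$; (sort) if $\Gamma\ \mathrm{ok}$ and $\mathcal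 A\,s_1\,s_2$ then $\Gamma\vdash c\,s_1:c\,s_2$; (var) if $\Gamma\ \mathrm{ok}$ and $(x,A)\in\Gamma$ then $\Gamma\vdash v\,x:A$; (prod) if $\mathcal R\,s_1\,s_2\,s_3$, $\Gamma\vdash A:c\,s_1$ and for every $y\notin\mathrm{dom}\,\Gamma$, $\Gamma,y:A\vdash B[x:=v\,y]:c\,s_2$, then $\Gamma\vdash\Pi[x:A]B:c\,s_3$; (abs) if $\mathcal R\,s_1\,s_2\,s_3$, $\Gamma\vdash A:c\,s_1$, for every $z\notin\mathrm{dom}\,\Gamma$, $\Gamma,z:A\vdash B[y:=v\,z]:c\,s_2$, and for every $z\notin\mathrm{dom}\,\Gamma$, $\Gamma,z:A\vdash M[x:=v\,z]:B[y:=v\,z]$, then $\Gamma\vdash\lambda[x:A]M:\Pi[y:A]B$; (app) if $\Gamma\vdash M:\Pi[x:A]B$, $\Gamma\vdash N:A$ and $\Gamma\vdash B[x:=N]:c\,s$ for some $s$, then $\Gamma\vdash M\cdot N:B[x:=N]$; (conv) if $\Gamma\vdash M:A$, $A\simeq_\beta B$ and $\Gamma\vdash B:c\,s$ for some $s$, then $\Gamma\vdash M:B$. (The premises quantified over all fresh names in (prod) and (abs) are infinitely branching.) Finitary (standard) presentation: the judgments $\Gamma\ \mathrm{ok}_s$ and $\Gamma\vdash_s M:A$ are defined mutually inductively by: (nil) $[\,]\ \mathrm{ok}_s$; (cons) if $\Gamma\ \mathrm{ok}_s$, $\Gamma\vdash_s A:c\,s$ and $x\notin\mathrm{dom}\,\Gamma$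 then $\Gamma,x:A\ \mathrm{ok}_s$; (sort) if $\Gamma\ \mathrm{ok}_s$ and $\mathcal A\,s_1\,s_2$ then $\Gamma\vdash_s c\,s_1:c\,s_2$; (var) if $\Gamma\ \mathrm{ok}_s$ and $(x,A)\in\Gamma$ then $\Gamma\vdash_s v\,x:A$; (prod) if $\mathcal R\,s_1\,s_2\,s_3$, $y\notin\mathrm{fv}\,B-x$, $\Gamma\vdash_s A:c\,s_1$ and $\Gamma,y:A\vdash_s B[x:=v\,y]:c\,s_2$, then $\Gamma\vdash_s\Pi[x:A]B:c\,s_3$; (abs) if $\mathcal R\,s_1\,s_2\,s_3$, $z\notin\mathrm{fv}\,M-x$, $z\notin\mathrm{fv}\,B-y$, $\Gamma\vdash_s A:c\,s_1$, $\Gamma,z:A\vdash_s B[y:=v\,z]:c\,s_2$ and $\Gamma,z:A\vdash_s M[x:=v\,z]:B[y:=v\,z]$, then $\Gamma\vdash_s\lambda[x:A]M:\Pi[y:A]B$; (app) if $\Gamma\vdash_s M:\Pi[x:A]B$ and $\Gamma\vdash_s N:A$ then $\Gamma\vdash_s M\cdot N:B[x:=N]$; (conv) if $\Gamma\vdash_s M:A$, $A\simeq_\beta B$ and $\Gamma\vdash_s B:c\,s$ for some $s$, then $\Gamma\vdash_s M:B$. *)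

From Stdlib Require Import List Relations.
Import ListNotations.
Set Implicit Arguments.

Inductive term (V C : Type) : Type :=
| Cst : C -> term V C
| Var : V -> term V C
| Lam : V -> term V C -> term V C -> term V C   (* Lam x A M = λ[x:A]M *)
| Pi  : V -> term V C -> term V C -> term V C   (* Pi x A B = Π[x:A]B *)
| App : term V C -> term V C -> term V C.
Arguments Cst {V C}. Arguments Var {V C}. Arguments Lam {V C}.
Arguments Pi {V C}. Arguments App {V C}.

Definition lremove {V} (eqd : forall x y : V, {x = y} + {x <> y}) (xs : list V) (x : V)
  : list V := filter (fun y => if eqd y x then false else true) xs.

Fixpoint fv {V C} (eqd : forall x y : V, {x = y} + {x <> y}) (t : term V C) : list V :=
  match t with
  | Cst _ => []
  | Var x => [x]
  | Lam x A M => fv eqd A ++ lremove eqd (fv eqd M) x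
  | Pi x A B => fv eqd A ++ lremove eqd (fv eqd B) x
  | App M N => fv eqd M ++ fv eqd N
  end.

Definition Xp {V} (enc : V -> nat) (dec : nat -> V) (chi' : list nat -> nat) (xs : list V) : V :=
  dec (chi' (map enc xs)).

Definition supd {V C} (eqd : forall x y : V, {x = y} + {x <> y})
  (s : V -> term V C) (x : V) (N : term V C) : V -> term V C :=
  fun y => if eqd y x then N else s y.

Definition Xs {V C} (eqd : forall x y : V, {x = y} + {x <> y}) (enc : V -> nat) (dec : nat -> V)
  (chi' : list nat -> nat) (s : V -> term V C) (xs : list V) : V :=
  Xp enc dec chi' (flat_map (fun y => fv eqd (s y)) xs).

Fixpoint sact {V C} (eqd : forall x y : V, {x = y} + {x <> y}) (enc : V -> nat) (dec : nat -> V)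
  (chi' : list nat -> nat) (t : term V C) (s : V -> term V C) : term V C :=
  match t with
  | Cst k => Cst k
  | Var x => s x
  | App M N => App (sact eqd enc dec chi' M s) (sact eqd enc dec chi' N s)
  | Lam x A M =>
      let y := Xs eqd enc dec chi' s (lremove eqd (fv eqd M) x) in
      Lam y (sact eqd enc dec chi' A s) (sact eqd enc dec chi' M (supd eqd s x (Var y)))
  | Pi x A B =>
      let y := Xs eqd enc dec chi' s (lremove eqd (fv eqd B) x) in
      Pi y (sact eqd enc dec chi' A s) (sact eqd enc dec chi' B (supd eqd s x (Var y)))
  end.

Definition usubst {V C} (eqd : forall x y : V, {x = y} + {x <> y}) (enc : V -> nat) (dec : nat -> V)
  (chi' : list nat -> nat) (M : term V C) (x : V) (N : term V C) : term V C :=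
  sact eqd enc dec chi' M (supd eqd Var x N).

Section Rel.
Context {V C : Type} (eqd : forall x y : V, {x = y} + {x <> y}) (enc : V -> nat) (dec : nat -> V)
  (chi' : list nat -> nat).

Local Notation "M {{ x := N }}" := (usubst eqd enc dec chi' M x N) (at level 10, x at next level).
Local Notation fvs := (fv eqd).
Local Notation rem := (lremove eqd).

Inductive alpha : term V C -> term V C -> Prop :=
| alpha_cst k : alpha (Cst k) (Cst k)
| alpha_var x : alpha (Var x) (Var x)
| alpha_app M N M' N' : alpha M M' -> alpha N N' -> alpha (App M N) (App M' N')
| alpha_lam x A M x' A' M' y : alpha A A' ->
    ~ In y (rem (fvs M) x) -> ~ In y (rem (fvs M') x') ->
    M{{ x := Var y }} = M'{{ x' := Var y }} -> alpha (Lam x A M) (Lam x' A' M')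
| alpha_pi x A M x' A' M' y : alpha A A' ->
    ~ In y (rem (fvs M) x) -> ~ In y (rem (fvs M') x') ->
    M{{ x := Var y }} = M'{{ x' := Var y }} -> alpha (Pi x A M) (Pi x' A' M').

Inductive betac : term V C -> term V C -> Prop :=
| betac_intro x A M N : betac (App (Lam x A M) N) (M{{ x := N }}).

Inductive betar : term V C -> term V C -> Prop :=
| betar_contr M N : betac M N -> betar M N
| betar_lam_body x A M M' : betar M M' -> betar (Lam x A M) (Lam x A M')
| betar_pi_body x A M M' : betar M M' -> betar (Pi x A M) (Pi x A M')
| betar_lam_dom x A A' M : betar A A' -> betar (Lam x A M) (Lam x A' M)
| betar_pi_dom x A A' M : betar A A' -> betar (Pi x A M) (Pi x A' M)
| betar_appl M N P : betar M N -> betar (App M P) (App N P)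
| betar_appr M N P : betar M N -> betar (App P M) (App P N).

Definition alpha_or_beta (M N : term V C) : Prop := alpha M N \/ betar M N.

Definition betaconv : term V C -> term V C -> Prop := clos_refl_sym_trans _ alpha_or_beta.

Definition context := list (V * term V C).
Definition dom (G : context) : list V := map fst G.

Context (Ax : C -> C -> Prop) (Rl : C -> C -> C -> Prop).

Inductive wf : context -> Prop :=
| wf_nil : wf []
| wf_cons G x A s : wf G -> typ G A (Cst s) -> ~ In x (dom G) -> wf ((x, A) :: G)
with typ : context -> term V C -> term V C -> Prop :=
| typ_sort G s1 s2 : wf G -> Ax s1 s2 -> typ G (Cst s1) (Cst s2)
| typ_var G x A : wf G -> In (x, A) G -> typ G (Var x) A
| typ_prod G x A B s1 s2 s3 : Rl s1 s2 s3 -> typ G A (Cst s1) ->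
    (forall y, ~ In y (dom G) -> typ ((y, A) :: G) (B{{ x := Var y }}) (Cst s2)) ->
    typ G (Pi x A B) (Cst s3)
| typ_abs G x y A M B s1 s2 s3 : Rl s1 s2 s3 -> typ G A (Cst s1) ->
    (forall z, ~ In z (dom G) -> typ ((z, A) :: G) (B{{ y := Var z }}) (Cst s2)) ->
    (forall z, ~ In z (dom G) -> typ ((z, A) :: G) (M{{ x := Var z }}) (B{{ y := Var z }})) ->
    typ G (Lam x A M) (Pi y A B)
| typ_app G M N x A B s : typ G M (Pi x A B) -> typ G N A -> typ G (B{{ x := N }}) (Cst s) ->
    typ G (App M N) (B{{ x := N }})
| typ_conv G M A B s : typ G M A -> betaconv A B -> typ G B (Cst s) -> typ G M B.

Inductive wfs : context -> Prop :=
| wfs_nil : wfs []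
| wfs_cons G x A s : wfs G -> typs G A (Cst s) -> ~ In x (dom G) -> wfs ((x, A) :: G)
with typs : context -> term V C -> term V C -> Prop :=
| typs_sort G s1 s2 : wfs G -> Ax s1 s2 -> typs G (Cst s1) (Cst s2)
| typs_var G x A : wfs G -> In (x, A) G -> typs G (Var x) A
| typs_prod G x y A B s1 s2 s3 : Rl s1 s2 s3 -> ~ In y (rem (fvs B) x) ->
    typs G A (Cst s1) -> typs ((y, A) :: G) (B{{ x := Var y }}) (Cst s2) ->
    typs G (Pi x A B) (Cst s3)
| typs_abs G x y z A M B s1 s2 s3 : Rl s1 s2 s3 -> ~ In z (rem (fvs M) x) ->
    ~ In z (rem (fvs B) y) -> typs G A (Cst s1) ->
    typs ((z, A) :: G) (B{{ y := Var z }}) (Cst s2) ->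
    typs ((z, A) :: G) (M{{ x := Var z }}) (B{{ y := Var z }}) ->
    typs G (Lam x A M) (Pi y A B)
| typs_app G M N x A B : typs G M (Pi x A B) -> typs G N A -> typs G (App M N) (B{{ x := N }})
| typs_conv G M A B s : typs G M A -> betaconv A B -> typs G B (Cst s) -> typs G M B.

End Rel.

(* The finitary rules are instances of the infinitary ones: wherever a (prod) or
   (abs) premise is quantified over all names outside dom Γ, it suffices to pick
   one name that is moreover outside the free variables of the bodies.  Such a
   name always exists because X' never returns a member of its argument, so a
   simultaneous induction on the two infinitary judgments translates every
   derivation rule by rule. *)
From Stdlib Require Import List.

Scheme wf_typ_ind := Induction for wf Sort Prop
with typ_wf_ind := Induction for typ Sort Prop.
Combined Scheme wf_typ_mutind from wf_typ_ind, typ_wf_ind.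

Lemma Xp_not_In {V : Type} (enc : V -> nat) (dec : nat -> V) (chi' : list nat -> nat) :
  (forall n, enc (dec n) = n) -> (forall ns, ~ In (chi' ns) ns) ->
  forall xs : list V, ~ In (Xp enc dec chi' xs) xs.
Proof.
  intros Henc Hchi xs Hin.
  apply (Hchi (map enc xs)).
  rewrite <- (Henc (chi' (map enc xs))).
  apply in_map; exact Hin.
Qed.

Section Finitary.

Context {V C : Type} (eqd : forall x y : V, {x = y} + {x <> y}) (enc : V -> nat)
  (dec : nat -> V) (chi' : list nat -> nat) (Ax : C -> C -> Prop) (Rl : C -> C -> C -> Prop).

Hypothesis fresh_exists : forall L : list V, exists y, ~ In y L.

Lemma wf_typ_finitary :
  (forall G, wf eqd enc dec chi' Ax Rl G -> wfs eqd enc dec chi' Ax Rl G) /\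
  (forall G M A, typ eqd enc dec chi' Ax Rl G M A -> typs eqd enc dec chi' Ax Rl G M A).
Proof.
  apply (@wf_typ_mutind V C eqd enc dec chi' Ax Rl (fun G _ => wfs eqd enc dec chi' Ax Rl G)
      (fun G M A _ => typs eqd enc dec chi' Ax Rl G M A)).
  - constructor.
  - intros; econstructor; eauto.
  - intros; econstructor; eauto.
  - intros; econstructor; eauto.
  - intros G x A B s1 s2 s3 HR _ IHA _ IHB.
    destruct (fresh_exists (lremove eqd (fv eqd B) x ++ dom G)) as [y Hy].
    rewrite in_app_iff in Hy.
    apply typs_prod with (y := y) (s1 := s1) (s2 := s2) (s3 := s3); auto.
  - intros G x y A M B s1 s2 s3 HR _ IHA _ IHB _ IHM.
    destruct (fresh_exists (lremove eqd (fv eqd M) x ++ lremove eqd (fv eqd B) y ++ dom G))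
      as [z Hz].
    rewrite !in_app_iff in Hz.
    apply typs_abs with (z := z) (s1 := s1) (s2 := s2) (s3 := s3);
      [ assumption | tauto | tauto | assumption | apply IHB; tauto | apply IHM; tauto ].
  - intros; eapply typs_app; eauto.
  - intros; eapply typs_conv; eauto.
Qed.

End Finitary.

Theorem mainTheorem19
  (V : Type) (eqd : forall x y : V, {x = y} + {x <> y})
  (enc : V -> nat) (dec : nat -> V) (Henc : forall n, enc (dec n) = n)
  (C : Type)
  (chi' : list nat -> nat) (Hchi : forall ns, ~ In (chi' ns) ns)
  (Ax : C -> C -> Prop) (Rl : C -> C -> C -> Prop) :
  (forall G : list (V * term V C), wf eqd enc dec chi' Ax Rl G -> wfs eqd enc dec chi' Ax Rl G) /\
  (forall (G : list (V * term V C)) (M A : term V C),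
      typ eqd enc dec chi' Ax Rl G M A -> typs eqd enc dec chi' Ax Rl G M A).
Proof.
  apply wf_typ_finitary.
  intro L; exists (Xp enc dec chi' L).
  exact (Xp_not_In enc dec chi' Henc Hchi L).
Qed.
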